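(* Let $\Omega=\{\Omega_1,\dots,\Omega_N\}$ be a finite set of points with distance function $d$, let $p\notin\Omega$ be a further point (with $d$ defined on $\Omega\cup\{p\}$), and let $r\in\{1,\dots,N\}$. Define, for $t\in\{1,\dots,N\}$, $f(t)=\max\big(d(p,\Omega_t),\ MMJ(\Omega_t,\Omega_r~|~\Omega)\big)$, and $\mathbb{X}=\{f(t): t\in\{1,\dots,N\}\}$. Then $MMJ(p,\Omega_r~|~\Omega+p)=\min(\mathbb{X})$, where $\Omega+p=\Omega\cup\{p\}$.
   Context: $d$ is a distance function (e.g. Euclidean distance) on the points considered, symmetric, nonnegative, with $d(x,x)=0$. For a finite point set $S$, a path from $i$ to $j$ in $S$ is a finite sequence of points of $S$ (at least two) starting at $i$ and ending at $j$, with no repeated points except that start and end may coincide when $i=j$. A jump of a path is the distance $d(x,y)$ between two consecutive points $x,y$, and $max\_jump$ of a path is its largest jump. The Min-Max-Jump distance with context $S$ is $MMJ(i,j~|~S)=\min\{max\_jump(\epsilon): \epsilon \text{ a path from } i \text{ to } j \text{ in } S\}$ for $i,j\in S$, with $MMJ(i,i~|~S)=0$. *)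

From HB Require Import structures.
From mathcomp Require Import all_boot all_order all_algebra.
From mathcomp Require Import boolp classical_sets reals.
Set Implicit Arguments. Unset Strict Implicit. Unset Printing Implicit Defensive.
Import Order.TTheory GRing.Theory Num.Theory.
Local Open Scope ring_scope.
Local Open Scope classical_set_scope.

Section MMJ.
Variables (T : eqType) (R : realType) (d : T -> T -> R).

Definition is_path (S : seq T) (i j : T) (s : seq T) : bool :=
  match s with
  | [::] => false
  | x :: s' =>
      [&& (2 <= size s)%N, x == i, last x s' == j, all (mem S) s &
          (if i == j then uniq s' else uniq s)]
  end.

Definition jumps (s : seq T) : seq R :=
  match s with [::] => [::] | x :: s' => pairmap d x s' end.

Definition max_jump (s : seq T) : R := foldr Num.max 0 (jumps s).

(* MMJ(i, j | S): the minimum over all paths from i to j in S of the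
   max_jump (the set of such values is finite and nonempty for i, j in S,
   so its infimum is its minimum); MMJ(i, i | S) = 0. *)
Definition MMJ (S : seq T) (i j : T) : R :=
  if i == j then 0
  else inf [set max_jump s | s in [set s | is_path S i j s]].

End MMJ.

From HB Require Import structures.
From mathcomp Require Import all_boot all_order all_algebra.
From mathcomp Require Import boolp classical_sets reals.
Set Implicit Arguments. Unset Strict Implicit.

Import Order.TTheory GRing.Theory Num.Theory.
Local Open Scope ring_scope.
Local Open Scope classical_set_scope.

(* A path from p to Omega_r in Omega + p is p followed by a path from some
   Omega_t to Omega_r that never returns to p, i.e. a path in Omega; conversely,
   prefixing p to a path in Omega gives a path in Omega + p.  The max jump of
   such a path is max (d p Omega_t) (max jump of the tail): minimising over the
   tails gives f t, and minimising over t gives the MMJ from p. *)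

Section Paths.
Variable T : eqType.
Implicit Types (S s : seq T) (i j p y : T).

Lemma is_path_split S i j s : is_path S i j s -> exists y s', s = [:: i, y & s'].
Proof.
case: s => [|x [|y s]] //; rewrite /is_path => /and5P[_ /eqP-> _ _ _].
by exists y, s.
Qed.

Lemma is_path_mem_start S i j s : is_path S i j (i :: s) -> i \in S.
Proof. by case/and5P=> _ _ _ /andP[]. Qed.

Lemma is_path_pair S i j : i \in S -> j \in S -> i != j -> is_path S i j [:: i; j].
Proof. by move=> iS jS ij; rewrite /is_path /= (negbTE ij) !eqxx iS jS inE ij. Qed.

Lemma is_path_cons S p j y s : p \notin S -> p != j -> y != j ->
  is_path S y j (y :: s) -> is_path (p :: S) p j [:: p, y & s].
Proof.
move=> pS pj yj; rewrite /is_path (negbTE yj) => /and5P[_ _ lj ySs uys].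
rewrite (negbTE pj); apply/and5P; split=> //.
  by rewrite /= mem_head; apply: sub_all ySs => z zS; apply/orP; right.
by apply/andP; split=> //; apply: contra pS => /(allP ySs).
Qed.

Lemma is_path_tail S p j y s : p != j -> y != j ->
  is_path (p :: S) p j [:: p, y & s] -> is_path S y j (y :: s).
Proof.
move=> pj yj; rewrite /is_path (negbTE pj) (negbTE yj).
case/and5P=> _ _ lj /andP[_ ySs] /andP[pys uys].
have {}ySs : all (mem (p :: S)) (y :: s) := ySs.
apply/and5P; split=> //.
- by case: s lj {ySs pys uys} => //= /eqP yj'; rewrite yj' eqxx in yj.
- apply/allP => z zys; have := allP ySs z zys; rewrite inE => /orP[/eqP zp|//].
  by rewrite -zp zys in pys.
Qed.

End Paths.

Section MinMaxJump.
Variables (T : eqType) (R : realType) (d : T -> T -> R).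
Implicit Types (S s : seq T) (i j p y : T).

Lemma max_jump_ge0 s : 0 <= max_jump d s.
Proof.
case: s => [|x s] //; rewrite /max_jump /=.
by elim: s x => [|y s IHs] x //=; rewrite le_max IHs orbT.
Qed.

Lemma max_jump_cons x y s :
  max_jump d [:: x, y & s] = Num.max (d x y) (max_jump d (y :: s)).
Proof. by []. Qed.

Lemma MMJ_id S i : MMJ d S i i = 0.
Proof. by rewrite /MMJ eqxx. Qed.

Lemma MMJ_le_max_jump S i j s : is_path S i j s -> MMJ d S i j <= max_jump d s.
Proof.
rewrite /MMJ; case: eqP => _ ps; first exact: max_jump_ge0.
by apply: ge_inf; [exists 0 => _ [s' _ <-]; apply: max_jump_ge0 | exists s].
Qed.

Lemma MMJ_ge S i j c : i \in S -> j \in S -> i != j ->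
  (forall s, is_path S i j s -> c <= max_jump d s) -> c <= MMJ d S i j.
Proof.
move=> iS jS ij c_le; rewrite /MMJ (negbTE ij).
apply: lb_le_inf => [|_ [s ps <-]]; last exact: c_le.
by exists (max_jump d [:: i; j]), [:: i; j] => //; apply: is_path_pair.
Qed.

Lemma MMJ_lt S i j c : i \in S -> j \in S -> i != j -> MMJ d S i j < c ->
  exists2 s, is_path S i j (i :: s) & max_jump d (i :: s) < c.
Proof.
move=> iS jS ij; rewrite /MMJ (negbTE ij) => /inf_lt[|_ [s ps <-] sc].
  by exists (max_jump d [:: i; j]), [:: i; j] => //; apply: is_path_pair.
by have [y [s' es]] := is_path_split ps; exists (y :: s'); rewrite -es.
Qed.

Lemma MMJ_cons_le S p j y : p \notin S -> j \in S -> y \in S ->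
  MMJ d (p :: S) p j <= Num.max (d p y) (MMJ d S y j).
Proof.
move=> pS jS yS; have pj : p != j by apply: contraNneq pS => ->.
have jpS : j \in p :: S by rewrite in_cons jS orbT.
have [->|yj] := eqVneq y j.
  rewrite MMJ_id -[Num.max _ 0]/(max_jump d [:: p; j]).
  by apply/MMJ_le_max_jump/is_path_pair; rewrite ?mem_head.
rewrite leNgt gt_max; apply/negP => /andP[dpy /(MMJ_lt yS jS yj)[s ys ltsm]].
have := MMJ_le_max_jump (is_path_cons pS pj yj ys).
by rewrite max_jump_cons leNgt gt_max dpy ltsm.
Qed.

Lemma MMJ_cons_ge S p j c : j \in S -> p != j ->
  (forall y, y \in S -> c <= Num.max (d p y) (MMJ d S y j)) ->
  c <= MMJ d (p :: S) p j.
Proof.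
move=> jS pj c_le; apply: MMJ_ge; rewrite ?mem_head ?in_cons ?jS ?orbT //.
move=> s0 ps; have [y [s es]] := is_path_split ps; rewrite {s0}es in ps *.
rewrite max_jump_cons.
have [-> {ps}|yj] := eqVneq y j.
  by apply: le_trans (c_le j jS) _; rewrite MMJ_id le_max2 ?max_jump_ge0.
have ys := is_path_tail pj yj ps.
apply: le_trans (c_le y (is_path_mem_start ys)) _.
by rewrite le_max2 ?MMJ_le_max_jump.
Qed.

End MinMaxJump.

Theorem corollary3p4 (T : eqType) (R : realType) (d : T -> T -> R)
    (N : nat) (Omega : 'I_N -> T) (p : T) (r : 'I_N) :
  injective Omega ->
  (forall t : 'I_N, p != Omega t) ->
  (forall x y, x \in p :: [seq Omega t | t <- enum 'I_N] ->
     y \in p :: [seq Omega t | t <- enum 'I_N] -> d x y = d y x) ->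
  (forall x y, x \in p :: [seq Omega t | t <- enum 'I_N] ->
     y \in p :: [seq Omega t | t <- enum 'I_N] -> 0 <= d x y) ->
  (forall x, x \in p :: [seq Omega t | t <- enum 'I_N] -> d x x = 0) ->
  let f := fun t : 'I_N =>
    Num.max (d p (Omega t)) (MMJ d [seq Omega t | t <- enum 'I_N] (Omega t) (Omega r)) in
  let m := MMJ d (p :: [seq Omega t | t <- enum 'I_N]) p (Omega r) in
  (exists t : 'I_N, m = f t) /\ (forall t : 'I_N, m <= f t).
Proof.
move=> _ pO _ _ _ f m; set S := [seq Omega t | t <- enum 'I_N].
have OS t : Omega t \in S by rewrite map_f ?mem_enum.
have pS : p \notin S by apply/mapP => -[t _ /eqP]; apply/negP/pO.
have m_le t : m <= f t := MMJ_cons_le d pS (OS r) (OS t).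
split=> //; have [t0 _ f_min] := @arg_minP _ _ _ r xpredT f isT.
exists t0; apply/eqP; rewrite eq_le m_le; apply: MMJ_cons_ge (OS r) (pO r) _.
by move=> _ /mapP[t _ ->]; apply: f_min.
Qed.
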